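(* Let $(x_t)_{t=1}^T$ and $(a_t)_{t=1}^T$ be sequences with $x_t,a_t>0$ for all $t$. Then for any $\alpha\in[0,1]$, $$\sum_{t=1}^T\frac{x_t^{1-\alpha}a_t}{\sqrt{1+\sum_{s=1}^tx_s^{1-2\alpha}}}\le2\sqrt{\Big(\sum_{t=1}^Tx_ta_t^2\Big)\log\Big(1+\sum_{t=1}^Tx_t^{1-2\alpha}\Big)}.$$ *)

From mathcomp Require Import all_boot all_order all_algebra.
From mathcomp Require Import all_classical all_reals all_analysis.

From mathcomp Require Import all_boot all_order all_algebra.
From mathcomp Require Import all_classical all_reals all_analysis.
From mathcomp Require Import ring lra.
Import Order.TTheory GRing.Theory Num.Theory.
Local Open Scope ring_scope.

(* Write y_t = x_t^(1-2 alpha) and S_t = 1 + y_1 + ... + y_t.  The t-th summand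
   squares to (x_t a_t^2) (y_t / S_t), so by Cauchy-Schwarz the sum is at most
   sqrt((sum x_t a_t^2) (sum y_t / S_t)).  Since y_t / S_t = 1 - S_(t-1) / S_t
   <= ln S_t - ln S_(t-1), the second sum telescopes to at most ln S_T. *)

Lemma mulr2n_le_add (R : rcfType) (z s m : R) :
  0 <= s -> 0 <= m -> z ^+ 2 <= s * m -> z *+ 2 <= s + m.
Proof.
move=> s_ge0 m_ge0 zsm; have [z_le0|z_gt0] := lerP z 0.
  by rewrite (le_trans (mulrn_wle0 _ z_le0)) ?addr_ge0.
rewrite -ler_sqr ?nnegrE ?addr_ge0 ?mulrn_wge0 ?(ltW z_gt0) //.
have -> : (s + m) ^+ 2 = (s - m) ^+ 2 + 4 * (s * m) by ring.
have -> : (z *+ 2) ^+ 2 = 4 * z ^+ 2 by rewrite mulr2n; ring.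
have := sqr_ge0 (s - m); lra.
Qed.

Lemma sum_le_sqrt_mul_sum (R : rcfType) (I : eqType) (r : seq I)
    (u p q : I -> R) :
    {in r, forall i, 0 <= p i} -> {in r, forall i, 0 <= q i} ->
    {in r, forall i, u i ^+ 2 <= p i * q i} ->
  \sum_(i <- r) u i <= Num.sqrt ((\sum_(i <- r) p i) * \sum_(i <- r) q i).
Proof.
move=> p_ge0 q_ge0 upq.
have cross i j : i \in r -> j \in r -> (u i * u j) *+ 2 <= p i * q j + p j * q i.
  move=> ri rj; apply: mulr2n_le_add; rewrite ?mulr_ge0 ?p_ge0 ?q_ge0 //.
  have -> : p i * q j * (p j * q i) = p i * q i * (p j * q j) by ring.
  by rewrite exprMn ler_pM ?sqr_ge0 ?upq.
have sq : (\sum_(i <- r) u i) ^+ 2 <= (\sum_(i <- r) p i) * \sum_(i <- r) q i.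
  rewrite -(ler_pMn2r (n := 2)) // expr2 !big_distrlr /= [leRHS]mulr2n.
  rewrite [X in _ <= _ + X]exchange_big -big_split -!sumrMnl /=.
  rewrite big_seq [leRHS]big_seq; apply: ler_sum => i ri.
  rewrite -big_split -sumrMnl /= big_seq [leRHS]big_seq.
  by apply: ler_sum => j rj; exact: cross.
by rewrite (le_trans (ler_norm _)) // -sqrtr_sqr ler_wsqrtr.
Qed.

Lemma ler_1Bdiv_lnB (R : realType) (u v : R) :
  0 < u -> 0 < v -> 1 - u / v <= ln v - ln u.
Proof.
move=> u_gt0 v_gt0; have uv_gt0 : 0 < u / v by rewrite divr_gt0.
suff : ln (u / v) <= u / v - 1 by rewrite ln_div ?posrE // => h; lra.
by have := @le_ln1Dx R (u / v - 1); rewrite subrKC; apply; lra.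
Qed.

Lemma sum_div_partial_sum_le_ln (R : realType) (n : nat) (y : nat -> R) :
  (forall t, 0 <= y t) ->
  \sum_(1 <= t < n.+1) y t / (1 + \sum_(1 <= s < t.+1) y s)
    <= ln (1 + \sum_(1 <= t < n.+1) y t).
Proof.
move=> y_ge0; elim: n => [|n IHn]; first by rewrite !big_geq // addr0 ln1.
set S := 1 + \sum_(1 <= t < n.+1) y t.
have S_gt0 : 0 < S by rewrite ltr_pwDl ?sumr_ge0.
have SD : 1 + \sum_(1 <= t < n.+2) y t = S + y n.+1.
  by rewrite big_nat_recr //= addrA.
have SD_gt0 : 0 < S + y n.+1 by have := y_ge0 n.+1; lra.
rewrite big_nat_recr //= SD.
suff : y n.+1 / (S + y n.+1) <= ln (S + y n.+1) - ln S by lra.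
have -> : y n.+1 / (S + y n.+1) = 1 - S / (S + y n.+1) by field; rewrite gt_eqF.
exact: ler_1Bdiv_lnB.
Qed.

Lemma sqr_powR1B (R : realType) (x b : R) :
  0 < x -> (x `^ (1 - b)) ^+ 2 = x * x `^ (1 - 2 * b).
Proof.
move=> x_gt0; rewrite -powR_mulrn ?powR_ge0 // -powRrM.
rewrite -{2}(powRr1 (ltW x_gt0)) -powRD ?(gt_eqF x_gt0) ?implybT //.
by congr (_ `^ _); ring.
Qed.

Theorem lemma28 (R : realType) (T : nat) (x a : nat -> R)
  (hx : forall t, (1 <= t <= T)%N -> 0 < x t)
  (ha : forall t, (1 <= t <= T)%N -> 0 < a t)
  (alpha : R) (halpha : 0 <= alpha <= 1) :
  \sum_(1 <= t < T.+1)
     (x t `^ (1 - alpha) * a t /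
        Num.sqrt (1 + \sum_(1 <= s < t.+1) x s `^ (1 - 2 * alpha)))
  <= 2 * Num.sqrt ((\sum_(1 <= t < T.+1) x t * a t ^+ 2) *
                   ln (1 + \sum_(1 <= t < T.+1) x t `^ (1 - 2 * alpha))).
Proof.
pose y t := x t `^ (1 - 2 * alpha).
pose S t := 1 + \sum_(1 <= s < t.+1) y s.
have y_ge0 t : 0 <= y t by exact: powR_ge0.
have S_gt0 t : 0 < S t by rewrite ltr_pwDl ?sumr_ge0.
have x_gt0 t : t \in index_iota 1 T.+1 -> 0 < x t.
  by rewrite mem_index_iota ltnS => /hx.
have xa2_ge0 : {in index_iota 1 T.+1, forall t, 0 <= x t * a t ^+ 2}.
  by move=> t /x_gt0/ltW x_ge0; rewrite mulr_ge0 ?sqr_ge0.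
apply: (le_trans (@sum_le_sqrt_mul_sum _ _ _ _
  (fun t => x t * a t ^+ 2) (fun t => y t / S t) xa2_ge0 _ _)).
- by move=> t _; rewrite divr_ge0 ?y_ge0 // ltW.
- move=> t /x_gt0 xt_gt0; rewrite expr_div_n exprMn sqr_powR1B // sqr_sqrtr.
    by rewrite /S /y le_eqVlt; apply/orP; left; apply/eqP; ring.
  exact: ltW (S_gt0 t).
rewrite (le_trans _ (ler_peMl (sqrtr_ge0 _) (ler1n R 2))) // ler_wsqrtr //.
rewrite ler_wpM2l ?sum_div_partial_sum_le_ln //.
by rewrite big_seq sumr_ge0.
Qed.
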